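(* Assume the setting below. For all $k\in\mathbb{N}$ and all integers $i\ge e-1$, $\mu_{k,i}=\mu_{k,i+1}$.
   Context: Let $K$ be a difference field of characteristic $0$, i.e. a field of characteristic $0$ with a field endomorphism $\sigma$. Let $\mathcal{Y}=\{y_1,\ldots,y_n\}$ be difference indeterminates and $K\{\mathcal{Y}\}$ the difference polynomial ring: the polynomial ring over $K$ in the variables $y_j^{(l)}$ ($1\le j\le n$, $l\in\mathbb{N}$), with $\sigma(y_j^{(l)})=y_j^{(l+1)}$. For $f\in K\{\mathcal{Y}\}$ write $f^{(j)}=\sigma^j(f)$. A $\sigma$-ideal is an ideal stable under $\sigma$; it is reflexive if $\sigma(a)\in I$ implies $a\in I$, and $\sigma$-prime if reflexive and prime. Let $\mathcal{Y}^{(k)}=\{y_1^{(k)},\dots,y_n^{(k)}\}$. Let $F=\{f_1,\ldots,f_r\}\subset K\{\mathcal{Y}\}$, $F^{(j)}=\{f_1^{(j)},\dots,f_r^{(j)}\}$, and let $e\ge1$ be the maximal $l$ such that some $y_j^{(l)}$ occurs in $F$. Let $\mathfrak{p}$ be a $\sigma$-prime ideal of $K\{\mathcal{Y}\}$ minimal over the $\sigma$-ideal $[F]$, and let $\kappa$ be the residue field of $\mathfrak{p}$ (the fraction field of $K\{\mathcal{Y}\}/\mathfrak{p}$). For $k\ge1$ and $i\ge e-1$, let $J_{k,i}$ be the $kr\times kn$ matrix $\partial(F^{(i-e+1)},\ldots,F^{(i-e+k)})/\partial(\mathcal{Y}^{(i+1)},\ldots,\mathcal{Y}^{(i+k)})$,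 i.e. its $(a,b)$ block ($1\le a,b\le k$) is the $r\times n$ matrix $(\partial f_l^{(i-e+a)}/\partial y_j^{(i+b)})_{l,j}$. Define $\mu_{0,i}:=0$ and, for $k\ge1$, $\mu_{k,i}:=\dim_\kappa\ker(J_{k,i}^{\tau})=kr-\operatorname{rank}_\kappa(J_{k,i})$, where $J_{k,i}^\tau$ is the transpose and $J_{k,i}$ is considered over $\kappa$ via the images of its entries. *)

From HB Require Import structures.
From mathcomp Require Import all_boot all_algebra.
From mathcomp Require Import finmap.
From mathcomp.multinomials Require Export monalg.

Set Implicit Arguments.
Unset Strict Implicit.
Unset Printing Implicit Defensive.

Import GRing.Theory.
Local Open Scope ring_scope.

(* The difference polynomial ring K{Y} in the difference indeterminates
   y_1..y_n : the polynomial ring over K in the variables y_j^(l),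
   indexed here by pairs (l, j) with l : nat and j : 'I_n. *)
Definition dvar (n : nat) : choiceType := (nat * 'I_n)%type.

Definition dpoly (K : fieldType) (n : nat) := {malg K[{cmonom (dvar n)}]}.

Definition yv (K : fieldType) (n : nat) (l : nat) (j : 'I_n) : dpoly K n :=
  << ucm ((l, j) : dvar n) >>.

(* the extension of sigma to K{Y}: coefficients are mapped by sigma and
   y_j^(l) is mapped to y_j^(l+1) *)
Definition dsigma (K : fieldType) (n : nat) (sK : K -> K) (f : dpoly K n)
  : dpoly K n :=
  mmap (fun c : K => (sK c)%:MP)
       (fun m : {cmonom (dvar n)} =>
          \prod_(v <- finsupp m) yv K v.1.+1 v.2 ^+ (m v)) f.

Definition dderiv (K : fieldType) (n : nat) (v : dvar n) (f : dpoly K n)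
  : dpoly K n :=
  \sum_(m <- msupp f) << ((m v)%:R * f@_m) *g divcm m (ucm v) >>.

Definition occurs (K : fieldType) (n : nat) (l : nat) (j : 'I_n)
  (f : dpoly K n) : Prop :=
  exists2 m, m \in msupp f & (0 < m ((l, j) : dvar n))%N.

Definition is_ideal (A : comNzRingType) (I : A -> Prop) : Prop :=
  [/\ I 0, (forall a b, I a -> I b -> I (a + b)) & (forall a b, I b -> I (a * b))].

Definition sigma_ideal (A : comNzRingType) (s : A -> A) (I : A -> Prop) : Prop :=
  is_ideal I /\ (forall a, I a -> I (s a)).

Definition reflexive_ideal (A : comNzRingType) (s : A -> A) (I : A -> Prop) : Prop :=
  forall a, I (s a) -> I a.

Definition prime_ideal (A : comNzRingType) (I : A -> Prop) : Prop :=
  [/\ is_ideal I, ~ I 1 & (forall a b, I (a * b) -> I a \/ I b)].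

Definition sigma_prime (A : comNzRingType) (s : A -> A) (I : A -> Prop) : Prop :=
  [/\ sigma_ideal s I, reflexive_ideal s I & prime_ideal I].

Definition sigma_gen (A : comNzRingType) (s : A -> A) (S : A -> Prop) (a : A)
  : Prop :=
  forall I, sigma_ideal s I -> (forall x, S x -> I x) -> I a.

Definition minimal_sigma_prime_over (A : comNzRingType) (s : A -> A)
  (S : A -> Prop) (p : A -> Prop) : Prop :=
  [/\ sigma_prime s p,
      (forall a, sigma_gen s S a -> p a) &
      (forall q, sigma_prime s q -> (forall a, sigma_gen s S a -> q a) ->
         (forall a, q a -> p a) -> forall a, p a -> q a)].

(* (L, phi) is (a copy of) the residue field of p: the fraction field of A/p *)
Definition residue_field_of (A : comNzRingType) (p : A -> Prop)
  (L : fieldType) (phi : A -> L) : Prop :=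
  (forall a, phi a = 0 <-> p a) /\
  (forall x : L, exists a b, phi b != 0 /\ x = phi a / phi b).

(* decoding an index of 'I_(m * n) as a pair (block index, inner index) *)
Definition unpair (m n : nat) (p : 'I_(m * n)) : 'I_m * 'I_n :=
  enum_val (cast_ord (esym (@mxvec_cast m n)) p).

(* J_{k,i} = d(F^(i-e+1),...,F^(i-e+k)) / d(Y^(i+1),...,Y^(i+k)),
   a (k r) x (k n) matrix; block (a,b) (0-based) is
   (d f_l^(i-e+1+a) / d y_j^(i+1+b))_{l,j}. *)
Definition jacobian (K : fieldType) (n r : nat) (sK : K -> K)
  (F : 'I_r -> dpoly K n) (e k i : nat) : 'M[dpoly K n]_(k * r, k * n) :=
  \matrix_(p < k * r, q < k * n)
    dderiv ((i + 1 + (unpair q).1)%N, (unpair q).2)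
           (iter (i + 1 - e + (unpair p).1) (dsigma sK) (F (unpair p).2)).

Definition mu (K : fieldType) (n r : nat) (sK : K -> K)
  (F : 'I_r -> dpoly K n) (e : nat) (L : fieldType) (phi : dpoly K n -> L)
  (k i : nat) : nat :=
  (k * r - \rank (map_mx phi (jacobian sK F e k i)))%N.

From HB Require Import structures.
From mathcomp Require Import all_boot all_algebra finmap.
From mathcomp Require Import ring.
From mathcomp.multinomials Require Import monalg.

Set Implicit Arguments.
Unset Strict Implicit.
Unset Printing Implicit Defensive.

Import GRing.Theory.
Local Open Scope ring_scope.

(* Differentiation commutes with sigma up to a shift of the variable:
   d sigma(f) / d y_j^(l+1) = sigma(d f / d y_j^(l)).  Hence J_{k,i+1} is
   J_{k,i} with sigma applied entrywise.  As p is a reflexive sigma-ideal,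
   sigma(a) lies in p iff a does, so sigma induces a field endomorphism of
   the residue field kappa, and field homomorphisms preserve the rank of a
   matrix. *)

Section ShiftMonomial.
Variable n : nat.
Implicit Types (x m : {cmonom (dvar n)}) (v w : dvar n).

Definition cmpow x k : {cmonom (dvar n)} := \big[mmul/mone]_(i < k) x.

Lemma cm_prod (T : Type) (s : seq T) (F : T -> {cmonom (dvar n)}) w :
  (\big[mmul/mone]_(t <- s) F t) w = (\sum_(t <- s) F t w)%N.
Proof. by elim: s => [|t s IH]; rewrite ?big_nil ?cm1 // !big_cons cmM IH. Qed.

Lemma cmpowE x k w : cmpow x k w = (k * x w)%N.
Proof. by rewrite cm_prod sum_nat_const card_ord. Qed.

Definition shiftv v : dvar n := (v.1.+1, v.2).

Definition shiftm m : {cmonom (dvar n)} :=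
  \big[mmul/mone]_(v <- finsupp m) cmpow (ucm (shiftv v)) (m v).

Lemma shiftmE m w : shiftm m w = if w.1 is l.+1 then m (l, w.2) else 0%N.
Proof.
rewrite /shiftm cm_prod.
under eq_bigr do rewrite cmpowE cmU.
case: w => [[|l] j] /=; first by rewrite big1 // => v _; rewrite muln0.
have shiftv_eq v : (shiftv v == (l.+1, j)) = (v == (l, j)).
  by case: v => a b; rewrite /shiftv !xpair_eqE eqSS.
under eq_bigr do rewrite shiftv_eq.
case: (finsuppP m (l, j)) => [lj_out | lj_in].
  rewrite big1_seq // => v /= v_in.
  by case: eqP v_in => [-> lj_in|]; [rewrite lj_in in lj_out | rewrite muln0].
rewrite (big_fsetD1 (l, j)) //= eqxx muln1 big1_fset ?addn0 // => v.
by rewrite in_fsetD1 => /andP[/negPf -> _]; rewrite muln0.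
Qed.

Lemma shiftm1 : shiftm mone = mone.
Proof. by apply/eqP/cmP => -[[|l] j]; rewrite shiftmE /= ?cm1. Qed.

Lemma shiftmM m1 m2 : shiftm (mmul m1 m2) = mmul (shiftm m1) (shiftm m2).
Proof. by apply/eqP/cmP => -[[|l] j]; rewrite !cmM !shiftmE /= ?cmM. Qed.

Lemma shiftm_shiftv m v : shiftm m (shiftv v) = m v.
Proof. by rewrite shiftmE; case: v. Qed.

Lemma shiftm_divU m v :
  shiftm (divcm m (ucm v)) = divcm (shiftm m) (ucm (shiftv v)).
Proof.
apply/eqP/cmP => -[[|l] j]; rewrite !divcmE !shiftmE //= divcmE !cmU.
by case: v => a b; rewrite /shiftv !xpair_eqE eqSS.
Qed.
End ShiftMonomial.

Lemma malgUM (R : nzRingType) (M : monomType) (c1 c2 : R) (m1 m2 : M) :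
  << c1 *g m1 >> * << c2 *g m2 >> = << c1 * c2 *g mmul m1 m2 >> :> {malg R[M]}.
Proof. by rewrite malgM_def fgmulUU. Qed.

Lemma malgU1M (R : nzRingType) (M : monomType) (m1 m2 : M) :
  << m1 >> * << m2 >> = << mmul m1 m2 >> :> {malg R[M]}.
Proof. by rewrite malgUM mul1r. Qed.

Lemma malg_additive_ext (M : choiceType) (G Z : zmodType)
    (Phi Psi : {additive {malg G[M]} -> Z}) :
  (forall c m, Phi << c *g m >> = Psi << c *g m >>) -> Phi =1 Psi.
Proof. by move=> PhiPsi g; rewrite (monalgE g) !raddf_sum; apply: eq_bigr. Qed.

Section DifferencePolynomials.
Variables (K : fieldType) (n : nat).
Local Notation M := {cmonom (dvar n)}.
Local Notation P := (dpoly K n).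
Implicit Types (m : M) (v w : dvar n) (c : K) (f : P).

Lemma yvX l j k : yv K l j ^+ k = << cmpow (ucm ((l, j) : dvar n)) k >>.
Proof.
elim: k => [|k IH]; first by rewrite expr0 /cmpow big_ord0.
(* The sides differ only in the choiceType instance of the monomials (inferred
   from the generic monomType in [malgU1M]); [reflexivity] unfolds it, whereas
   [done] does not terminate.  The same happens twice below. *)
by rewrite exprS IH /yv malgU1M /cmpow big_ord_recl; reflexivity.
Qed.

Lemma prod_yvX_finsupp m :
  \prod_(v <- finsupp m) yv K v.1.+1 v.2 ^+ (m v) = << shiftm m >>.
Proof.
rewrite /shiftm; elim: (finsupp m : seq _) => [|[l j] s IH].
  by rewrite !big_nil.
by rewrite !big_cons IH yvX malgU1M; reflexivity.
Qed.

Definition shiftU m : P := << shiftm m >>.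

Lemma shiftU_is_mmorphism : mmorphism shiftU.
Proof. by split=> [m1 m2|]; rewrite /shiftU ?shiftmM ?malgUM ?mul1r ?shiftm1. Qed.
HB.instance Definition _ := isMultiplicative.Build M P shiftU shiftU_is_mmorphism.

Variable sK : {rmorphism K -> K}.

Lemma dsigmaE f : dsigma sK f = mmap (malgC \o sK) shiftU f.
Proof.
by rewrite /dsigma !mmapE; apply: eq_bigr => m _; rewrite prod_yvX_finsupp.
Qed.

Lemma dsigma_is_additive : additive (@dsigma K n sK).
Proof. by move=> f g; rewrite !dsigmaE raddfB. Qed.
HB.instance Definition _ :=
  GRing.isAdditive.Build P P (@dsigma K n sK) dsigma_is_additive.

Lemma dsigma_is_multiplicative : GRing.multiplicative (@dsigma K n sK).
Proof. by split=> [f g|]; rewrite !dsigmaE (rmorphM, rmorph1). Qed.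
HB.instance Definition _ :=
  GRing.isMultiplicative.Build P P (@dsigma K n sK) dsigma_is_multiplicative.

Lemma dsigmaU c m : dsigma sK << c *g m >> = << sK c *g shiftm m >>.
Proof. by rewrite dsigmaE mmapU /= malgUM mulr1 mul1m. Qed.

Definition derivU v m : P := << (m v)%:R *g divcm m (ucm v) >>.

Lemma dderivE v f : dderiv v f = mmap malgC (derivU v) f.
Proof.
by rewrite /dderiv mmapE; apply: eq_bigr => m _; rewrite malgUM mul1m mulrC.
Qed.

Lemma dderiv_is_additive v : additive (@dderiv K n v).
Proof. by move=> f g; rewrite !dderivE raddfB. Qed.
HB.instance Definition _ v :=
  GRing.isAdditive.Build P P (@dderiv K n v) (dderiv_is_additive v).

Lemma dderivU v c m :
  dderiv v << c *g m >> = << c * (m v)%:R *g divcm m (ucm v) >>.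
Proof. by rewrite dderivE mmapU malgUM mul1m. Qed.

Lemma dderiv_dsigma w f :
  dderiv (shiftv w) (dsigma sK f) = dsigma sK (dderiv w f).
Proof.
apply: (@malg_additive_ext _ _ _
  (dderiv (shiftv w) \o dsigma sK) (dsigma sK \o dderiv w)) => c m /=.
rewrite dsigmaU !dderivU dsigmaU shiftm_shiftv shiftm_divU rmorphM rmorph_nat.
reflexivity.
Qed.
End DifferencePolynomials.

Section InducedEndomorphism.
Variables (A : comNzRingType) (L : fieldType).
Variables (s : {rmorphism A -> A}) (phi : {rmorphism A -> L}).
Hypothesis phi_s_eq0 : forall a, (phi (s a) == 0) = (phi a == 0).
Hypothesis phi_frac : forall x : L, exists a b, phi b != 0 /\ x = phi a / phi b.

Lemma phi_s_neq0 b : phi b != 0 -> phi (s b) != 0.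
Proof. by rewrite phi_s_eq0. Qed.

Lemma phi_s_frac_eq a b c d : phi b != 0 -> phi d != 0 ->
  phi a / phi b = phi c / phi d -> phi (s a) / phi (s b) = phi (s c) / phi (s d).
Proof.
move=> nzb nzd /eqP; rewrite eqr_div // -!rmorphM -subr_eq0 -rmorphB -phi_s_eq0.
by rewrite !rmorphB !rmorphM subr_eq0 -eqr_div ?phi_s_neq0 // => /eqP.
Qed.

Lemma exists_frac x :
  exists ab : A * A, (phi ab.2 != 0) && (x == phi ab.1 / phi ab.2).
Proof. by have [a [b [nzb ->]]] := phi_frac x; exists (a, b); rewrite nzb eqxx. Qed.

Definition induced_endo (x : L) : L :=
  let ab := xchoose (exists_frac x) in phi (s ab.1) / phi (s ab.2).

Lemma induced_endo_frac a b :
  phi b != 0 -> induced_endo (phi a / phi b) = phi (s a) / phi (s b).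
Proof.
move=> nzb; rewrite /induced_endo.
case: (xchoose _) (xchooseP (exists_frac (phi a / phi b))) => a0 b0 /=.
by case/andP=> nzb0 /eqP/esym/phi_s_frac_eq; apply.
Qed.

Lemma induced_endo_phi a : induced_endo (phi a) = phi (s a).
Proof.
by have := @induced_endo_frac a 1; rewrite !rmorph1 !divr1; apply; exact: oner_neq0.
Qed.

Lemma induced_endo_is_additive : additive induced_endo.
Proof.
move=> x y; have [a [b [nzb ->]]] := phi_frac x; have [c [d [nzd ->]]] := phi_frac y.
have nzbd : phi (b * d) != 0 by rewrite rmorphM mulf_neq0.
have -> : phi a / phi b - phi c / phi d = phi (a * d - c * b) / phi (b * d).
  by rewrite rmorphB !rmorphM; field; rewrite nzb nzd.
have [nzsb nzsd] := (phi_s_neq0 nzb, phi_s_neq0 nzd).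
by rewrite !induced_endo_frac // !rmorphB !rmorphM; field; rewrite nzsb nzsd.
Qed.
HB.instance Definition _ :=
  GRing.isAdditive.Build L L induced_endo induced_endo_is_additive.

Lemma induced_endo_is_multiplicative : GRing.multiplicative induced_endo.
Proof.
split=> [x y|]; last by rewrite -(rmorph1 phi) induced_endo_phi !rmorph1.
have [a [b [nzb ->]]] := phi_frac x; have [c [d [nzd ->]]] := phi_frac y.
have nzbd : phi (b * d) != 0 by rewrite rmorphM mulf_neq0.
have -> : phi a / phi b * (phi c / phi d) = phi (a * c) / phi (b * d).
  by rewrite !rmorphM; field; rewrite nzb nzd.
have [nzsb nzsd] := (phi_s_neq0 nzb, phi_s_neq0 nzd).
by rewrite !induced_endo_frac // !rmorphM; field; rewrite nzsb nzsd.
Qed.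
HB.instance Definition _ :=
  GRing.isMultiplicative.Build L L induced_endo induced_endo_is_multiplicative.

Lemma mxrank_map_endo m n (J : 'M[A]_(m, n)) :
  \rank (map_mx phi (map_mx s J)) = \rank (map_mx phi J).
Proof.
have -> : map_mx phi (map_mx s J) = map_mx induced_endo (map_mx phi J).
  by apply/matrixP => i j; rewrite !mxE induced_endo_phi.
exact: mxrank_map.
Qed.
End InducedEndomorphism.

Lemma jacobianS (K : fieldType) (n r : nat) (sK : {rmorphism K -> K})
    (F : 'I_r -> dpoly K n) (e k i : nat) : (e <= i.+1)%N ->
  jacobian sK F e k i.+1 = map_mx (dsigma sK) (jacobian sK F e k i).
Proof.
move=> le_e_i1; apply/matrixP => a b; rewrite !mxE.
have -> : (i.+1 + 1 - e + (unpair a).1 = (i + 1 - e + (unpair a).1).+1)%N.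
  by rewrite addn1 subSn // addn1.
by rewrite iterS -dderiv_dsigma /shiftv /= !addn1 addSn.
Qed.

Theorem mainTheorem4
  (K : fieldType) (charK0 : [pchar K] =i pred0)
  (sK : {rmorphism K -> K})
  (n r : nat) (F : 'I_r -> dpoly K n) (e : nat)
  (e_ge1 : (1 <= e)%N)
  (e_occ : exists t j, occurs e j (F t))
  (e_max : forall t l j, occurs l j (F t) -> (l <= e)%N)
  (p : dpoly K n -> Prop)
  (p_min : minimal_sigma_prime_over (dsigma sK)
             (fun f => exists t, f = F t) p)
  (L : fieldType) (phi : {rmorphism dpoly K n -> L})
  (kappa : residue_field_of p phi) :
  forall k i : nat, (e.-1 <= i)%N ->
    mu sK F e phi k i = mu sK F e phi k i.+1.
Proof.
move=> k i le_e1_i.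
have le_e_i1 : (e <= i.+1)%N by rewrite -(prednK e_ge1) ltnS.
have [[[_ p_sigma] p_reflexive _] _ _] := p_min.
have [phi_eq0 phi_frac] := kappa.
have phi_sigma_eq0 a : (phi (dsigma sK a) == 0) = (phi a == 0).
  apply/eqP/eqP => /phi_eq0 pa; apply/phi_eq0.
  - exact: p_reflexive.
  - exact: p_sigma.
by rewrite /mu jacobianS // mxrank_map_endo.
Qed.
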